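(* Let $(M,g,J)$ be an $RK$-manifold of real dimension $2n\ge 4$ which is of pointwise constant antiholomorphic sectional curvature $\nu$ (so $\nu$ is a function on $M$). Then at every point $p\in M$ the curvature tensor $R$ has the form $$R=\frac16\psi+\nu R_1-\frac{2n-1}{3}\,\nu R_2,$$ and moreover $$3S'-(n+1)S=\frac{1}{2n}\bigl(3\tau'-(n+1)\tau\bigr)g,\qquad \nu=\frac{(2n+1)\tau-3\tau'}{8n(n^2-1)}.$$
   Context: $(M,g,J)$ is an almost Hermitian manifold with metric $g$, almost complex structure $J$, and curvature tensor $R$ of type $(0,4)$, with sign convention such that the sectional curvature of a 2-plane $\alpha\subset T_pM$ with orthonormal basis $\{x,y\}$ is $K(\alpha,p)=R(x,y,y,x)$. A 2-plane $\alpha$ is antiholomorphic if $J\alpha\perp\alpha$. $M$ has pointwise constant antiholomorphic sectional curvature $\nu$ if for every $p\in M$, $K(\alpha,p)=\nu(p)$ for all antiholomorphic 2-planes $\alpha\subset T_pM$. $M$ is an $RK$-manifold if $R(x,y,z,u)=R(Jx,Jy,Jz,Ju)$ for all $x,y,z,u\in T_pM$, $p\in M$. Define $R'(x,y,z,u)=R(x,y,Jz,Ju)$. For an orthonormal basis $\{E_1,\dots,E_{2n}\}$ of $T_pM$, the Ricci tensor is $S(y,z)=\sum_i R(E_i,y,z,E_i)$ and the scalar curvature $\tau=\sum_i S(E_i,E_i)$; similarly $S'(y,z)=\sum_i R'(E_i,y,z,E_i)$ and $\tau'=\sum_i S'(E_i,E_i)$. The tensors $R_1,R_2,\psi$ are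 $R_1(x,y,z,u)=g(y,z)g(x,u)-g(x,z)g(y,u)$; $R_2(x,y,z,u)=g(Jy,z)g(Jx,u)-g(Jx,z)g(Jy,u)-2g(Jx,y)g(Jz,u)$; $\psi(x,y,z,u)=g(Jy,z)S(Jx,u)-g(Jx,z)S(Jy,u)-2g(Jx,y)S(Jz,u)+g(Jx,u)S(Jy,z)-g(Jy,u)S(Jx,z)-2g(Jz,u)S(Jx,y)$. *)

(* Pointwise (tangent-space) formalization of the curvature
   algebra of an almost Hermitian manifold at a point p. *)
From HB Require Import structures.
From mathcomp Require Import all_boot all_order all_algebra.
Set Implicit Arguments. Unset Strict Implicit. Unset Printing Implicit Defensive.
Import Order.TTheory GRing.Theory Num.Theory.
Local Open Scope ring_scope.

Section TangentAlgebra.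
Variables (R : realFieldType) (m : nat).
Notation V := 'rV[R]_m.

Definition gform (G : 'M[R]_m) (x y : V) : R := (x *m G *m y^T) 0 0.

Definition Jact (J : 'M[R]_m) (x : V) : V := x *m J.

Definition tensor4 := V -> V -> V -> V -> R.

Definition multilinear4 (T : tensor4) : Prop :=
  [/\ forall a x x' y z u, T (a *: x + x') y z u = a * T x y z u + T x' y z u,
      forall a x y y' z u, T x (a *: y + y') z u = a * T x y z u + T x y' z u,
      forall a x y z z' u, T x y (a *: z + z') u = a * T x y z u + T x y z' u &
      forall a x y z u u', T x y z (a *: u + u') = a * T x y z u + T x y z u'].

Definition curvature_tensor (T : tensor4) : Prop :=
  [/\ multilinear4 T,
      forall x y z u, T x y z u = - T y x z u,
      forall x y z u, T x y z u = - T x y u z &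
      forall x y z u, T x y z u + T y z x u + T z x y u = 0].

Definition RK (T : tensor4) (J : 'M[R]_m) : Prop :=
  forall x y z u, T x y z u = T (Jact J x) (Jact J y) (Jact J z) (Jact J u).

(* {x,y} orthonormal basis of an antiholomorphic 2-plane alpha (J alpha _|_ alpha) *)
Definition antihol_onb (G J : 'M[R]_m) (x y : V) : Prop :=
  [/\ gform G x x = 1, gform G y y = 1, gform G x y = 0 &
      [/\ gform G (Jact J x) x = 0, gform G (Jact J x) y = 0,
          gform G (Jact J y) x = 0 & gform G (Jact J y) y = 0]].

(* K(alpha) = T(x,y,y,x) = nu for every antiholomorphic plane alpha *)
Definition const_antihol (T : tensor4) (G J : 'M[R]_m) (nu : R) : Prop :=
  forall x y, antihol_onb G J x y -> T x y y x = nu.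

Definition orthonormal_basis (G : 'M[R]_m) (E : 'I_m -> V) : Prop :=
  forall i j, gform G (E i) (E j) = (i == j)%:R.

Definition Rprime (T : tensor4) (J : 'M[R]_m) : tensor4 :=
  fun x y z u => T x y (Jact J z) (Jact J u).

Definition Ricci (T : tensor4) (E : 'I_m -> V) (y z : V) : R :=
  \sum_i T (E i) y z (E i).

Definition scalar_curv (S : V -> V -> R) (E : 'I_m -> V) : R :=
  \sum_i S (E i) (E i).

Definition R1 (G : 'M[R]_m) : tensor4 := fun x y z u =>
  gform G y z * gform G x u - gform G x z * gform G y u.

Definition R2 (G J : 'M[R]_m) : tensor4 := fun x y z u =>
  gform G (Jact J y) z * gform G (Jact J x) u
  - gform G (Jact J x) z * gform G (Jact J y) u
  - 2 * gform G (Jact J x) y * gform G (Jact J z) u.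

Definition psi (G J : 'M[R]_m) (S : V -> V -> R) : tensor4 := fun x y z u =>
  gform G (Jact J y) z * S (Jact J x) u
  - gform G (Jact J x) z * S (Jact J y) u
  - 2 * gform G (Jact J x) y * S (Jact J z) u
  + gform G (Jact J x) u * S (Jact J y) z
  - gform G (Jact J y) u * S (Jact J x) z
  - 2 * gform G (Jact J z) u * S (Jact J x) y.

End TangentAlgebra.

(* Put U := R - (psi / 6 + nu R1 - (m - 1) / 3 nu R2) with m = 2n.  The tensors
   psi, R1 and R2 are RK curvature tensors with Ricci contractions 6 S, (m - 1) g
   and 3 g, taking the values 0, 1 and 0 on antiholomorphic planes; so U is a
   Ricci-flat RK curvature tensor vanishing on antiholomorphic planes.  Such a
   tensor is zero as soon as m >= 3: U(x,y,y,x) vanishes whenever y is orthogonal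
   to J x, hence by polarisation U(x,y,z,x) is determined by U(x,Jx,.,x), and
   Ricci-flatness together with the RK symmetry forces U(x,Jx,.,x) = 0.
   Contracting the resulting expression of R with J gives S' and tau', and the
   two remaining identities are linear algebra in S, S', tau, tau', nu.
   Since the scalars form an arbitrary real field, vectors cannot be normalised;
   statements about unit vectors are extended by polynomial interpolation along
   lines x + t e instead. *)

From HB Require Import structures.
From mathcomp Require Import all_boot all_order all_algebra.
From mathcomp Require Import ring lra.
Set Implicit Arguments. Unset Strict Implicit. Unset Printing Implicit Defensive.
Import Order.TTheory GRing.Theory Num.Theory.
Local Open Scope ring_scope.

Section LinearForms.
Variables (R : pzRingType) (V : lmodType R).

Definition linear_form (f : V -> R) := forall a x y, f (a *: x + y) = a * f x + f y.

Variable f : V -> R.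
Hypothesis linf : linear_form f.

Lemma linear_form0 : f 0 = 0.
Proof.
have := linf 1 0 0; rewrite scaler0 addr0 mul1r => e.
by apply: (addrI (f 0)); rewrite addr0 -e.
Qed.

Lemma linear_formD x y : f (x + y) = f x + f y.
Proof. by rewrite -{1}[x]scale1r linf mul1r. Qed.

Lemma linear_formZ a x : f (a *: x) = a * f x.
Proof. by rewrite -[a *: x]addr0 linf linear_form0 addr0. Qed.

Lemma linear_formN x : f (- x) = - f x.
Proof. by rewrite -scaleN1r linear_formZ mulN1r. Qed.

Lemma linear_formB x y : f (x - y) = f x - f y.
Proof. by rewrite linear_formD linear_formN. Qed.

Lemma linear_form_sum (I : finType) (a : I -> R) (v : I -> V) :
  f (\sum_i a i *: v i) = \sum_i a i * f (v i).
Proof.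
rewrite (big_morph f linear_formD linear_form0).
by apply: eq_bigr => i _; rewrite linear_formZ.
Qed.

End LinearForms.

Section HermitianStructure.
Variables (R : realFieldType) (m : nat) (G J : 'M[R]_m).
Notation V := 'rV[R]_m.
Local Notation g := (gform G).
Local Notation j := (Jact J).

Lemma gform_linl z : linear_form (fun x : V => g x z).
Proof. by move=> a x y; rewrite /gform !mulmxDl -!scalemxAl !mxE. Qed.

Lemma JactP a (x y : V) : j (a *: x + y) = a *: j x + j y.
Proof. by rewrite /Jact mulmxDl scalemxAl. Qed.

Lemma linear_form_comp_J (f : V -> R) : linear_form f -> linear_form (fun x => f (j x)).
Proof. by move=> linf a x y; rewrite JactP linf. Qed.

Lemma Jact0 : j 0 = 0.
Proof. by rewrite /Jact mul0mx. Qed.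

Lemma JactN (x : V) : j (- x) = - j x.
Proof. by rewrite /Jact mulNmx. Qed.

Hypothesis G_sym : G^T = G.

Lemma gformC (x y : V) : g x y = g y x.
Proof.
rewrite /gform -[in LHS](trmxK (x *m G *m y^T)) mxE.
by rewrite !trmx_mul trmxK G_sym mulmxA.
Qed.

Lemma gform_linr z : linear_form (fun x : V => g z x).
Proof. by move=> a x y; rewrite !(gformC z) gform_linl. Qed.

Lemma gformPl a (x y z : V) : g (a *: x + y) z = a * g x z + g y z.
Proof. exact: gform_linl. Qed.
Lemma gformPr a (x y z : V) : g z (a *: x + y) = a * g z x + g z y.
Proof. exact: gform_linr. Qed.
Lemma gformDl (x y z : V) : g (x + y) z = g x z + g y z.
Proof. exact: (linear_formD (gform_linl z)). Qed.
Lemma gformDr (x y z : V) : g z (x + y) = g z x + g z y.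
Proof. exact: (linear_formD (gform_linr z)). Qed.
Lemma gformZl a (x z : V) : g (a *: x) z = a * g x z.
Proof. exact: (linear_formZ (gform_linl z)). Qed.
Lemma gformZr a (x z : V) : g z (a *: x) = a * g z x.
Proof. exact: (linear_formZ (gform_linr z)). Qed.
Lemma gformNl (x z : V) : g (- x) z = - g x z.
Proof. exact: (linear_formN (gform_linl z)). Qed.
Lemma gformNr (x z : V) : g z (- x) = - g z x.
Proof. exact: (linear_formN (gform_linr z)). Qed.
Lemma gformBl (x y z : V) : g (x - y) z = g x z - g y z.
Proof. exact: (linear_formB (gform_linl z)). Qed.
Lemma gformBr (x y z : V) : g z (x - y) = g z x - g z y.
Proof. exact: (linear_formB (gform_linr z)). Qed.

Hypothesis J2 : J *m J = - 1%:M.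

Lemma JactK (x : V) : j (j x) = - x.
Proof. by rewrite /Jact -mulmxA J2 mulmxN mulmx1. Qed.

Hypothesis J_iso : forall x y, g (j x) (j y) = g x y.

Lemma gform_Jl (x y : V) : g (j x) y = - g x (j y).
Proof. by rewrite -J_iso JactK (linear_formN (gform_linl _)). Qed.

Lemma gform_J_self (x : V) : g (j x) x = 0.
Proof. by have := gform_Jl x x; rewrite (gformC x); lra. Qed.

Variable E : 'I_m -> V.
Hypothesis E_onb : orthonormal_basis G E.

Lemma onb_expansion (v : V) : v = \sum_i g v (E i) *: E i.
Proof.
(* With M the matrix of rows E i, orthonormality reads M (G M^T) = 1, so also
   (G M^T) M = 1 and v = (v G M^T) M. *)
pose M : 'M[R]_m := \matrix_i E i.
have rowM i : row i M = E i by rewrite rowK.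
have entry (a : 'rV[R]_m) (B : 'M[R]_m) k : (a *m B^T) 0 k = (a *m (row k B)^T) 0 0.
  by rewrite !mxE; apply: eq_bigr => l _; rewrite !mxE.
have MGM : M *m (G *m M^T) = 1%:M.
  apply/matrixP => i k; rewrite mulmxA.
  have -> : (M *m G *m M^T) i k = (row i (M *m G *m M^T)) 0 k by rewrite [RHS]mxE.
  rewrite !row_mul rowM entry rowM.
  by have := E_onb i k; rewrite /gform => ->; rewrite !mxE.
rewrite -{1}[v]mulmx1 -(mulmx1C MGM) mulmxA mulmx_sum_row.
apply: eq_bigr => i _; rewrite rowM; congr (_ *: _).
by rewrite /gform mulmxA entry rowM.
Qed.

Lemma sum_onb_form (f : V -> R) v : linear_form f -> \sum_i g v (E i) * f (E i) = f v.
Proof. by move=> linf; rewrite {2}(onb_expansion v) (linear_form_sum linf). Qed.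

Lemma sum_onb_formC (f : V -> R) v : linear_form f -> \sum_i g (E i) v * f (E i) = f v.
Proof. by move=> linf; rewrite -(sum_onb_form v linf); apply: eq_bigr => i _; rewrite gformC. Qed.

Lemma onb_unit i : g (E i) (E i) = 1.
Proof. by rewrite E_onb eqxx. Qed.

Lemma trace_gform : \sum_i g (E i) (E i) = m%:R.
Proof.
rewrite (eq_bigr (fun _ => 1)) => [|i _]; last exact: onb_unit.
by rewrite sumr_const card_ord.
Qed.

Lemma trace_J_invariant (B : V -> V -> R) :
  (forall b, linear_form (fun a => B a b)) -> (forall a, linear_form (B a)) ->
  \sum_i B (j (E i)) (j (E i)) = \sum_i B (E i) (E i).
Proof.
move=> linl linr.
under eq_bigr do rewrite -(sum_onb_form _ (linl _)).
rewrite exchange_big; apply: eq_bigr => k _ /=.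
under eq_bigr do rewrite gform_Jl mulNr.
rewrite sumrN (sum_onb_formC _ (linear_form_comp_J (linr _))) JactK.
by rewrite (linear_formN (linr _)) opprK.
Qed.

End HermitianStructure.

Section Multilinear.
Variables (R : realFieldType) (m : nat) (T : tensor4 R m).
Notation V := 'rV[R]_m.
Hypothesis T_ml : multilinear4 T.

Lemma tensor_lin1 y z u : linear_form (fun x : V => T x y z u).
Proof. by case: T_ml => h _ _ _ a x x'; rewrite h. Qed.
Lemma tensor_lin2 x z u : linear_form (fun y : V => T x y z u).
Proof. by case: T_ml => _ h _ _ a y y'; rewrite h. Qed.
Lemma tensor_lin3 x y u : linear_form (fun z : V => T x y z u).
Proof. by case: T_ml => _ _ h _ a z z'; rewrite h. Qed.
Lemma tensor_lin4 x y z : linear_form (fun u : V => T x y z u).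
Proof. by case: T_ml => _ _ _ h a u u'; rewrite h. Qed.

Lemma tensorD1 (x x' y z u : V) : T (x + x') y z u = T x y z u + T x' y z u.
Proof. exact: (linear_formD (tensor_lin1 _ _ _)). Qed.
Lemma tensorZ1 a (x y z u : V) : T (a *: x) y z u = a * T x y z u.
Proof. exact: (linear_formZ (tensor_lin1 _ _ _)). Qed.
Lemma tensorN1 (x y z u : V) : T (- x) y z u = - T x y z u.
Proof. exact: (linear_formN (tensor_lin1 _ _ _)). Qed.
Lemma tensor0 (y z u : V) : T 0 y z u = 0.
Proof. exact: (linear_form0 (tensor_lin1 _ _ _)). Qed.

Lemma tensorD2 (x y y' z u : V) : T x (y + y') z u = T x y z u + T x y' z u.
Proof. exact: (linear_formD (tensor_lin2 _ _ _)). Qed.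
Lemma tensorZ2 a (x y z u : V) : T x (a *: y) z u = a * T x y z u.
Proof. exact: (linear_formZ (tensor_lin2 _ _ _)). Qed.
Lemma tensorN2 (x y z u : V) : T x (- y) z u = - T x y z u.
Proof. exact: (linear_formN (tensor_lin2 _ _ _)). Qed.
Lemma tensorB2 (x y y' z u : V) : T x (y - y') z u = T x y z u - T x y' z u.
Proof. exact: (linear_formB (tensor_lin2 _ _ _)). Qed.

Lemma tensorD3 (x y z z' u : V) : T x y (z + z') u = T x y z u + T x y z' u.
Proof. exact: (linear_formD (tensor_lin3 _ _ _)). Qed.
Lemma tensorZ3 a (x y z u : V) : T x y (a *: z) u = a * T x y z u.
Proof. exact: (linear_formZ (tensor_lin3 _ _ _)). Qed.
Lemma tensorN3 (x y z u : V) : T x y (- z) u = - T x y z u.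
Proof. exact: (linear_formN (tensor_lin3 _ _ _)). Qed.
Lemma tensorB3 (x y z z' u : V) : T x y (z - z') u = T x y z u - T x y z' u.
Proof. exact: (linear_formB (tensor_lin3 _ _ _)). Qed.

Lemma tensorD4 (x y z u u' : V) : T x y z (u + u') = T x y z u + T x y z u'.
Proof. exact: (linear_formD (tensor_lin4 _ _ _)). Qed.
Lemma tensorZ4 a (x y z u : V) : T x y z (a *: u) = a * T x y z u.
Proof. exact: (linear_formZ (tensor_lin4 _ _ _)). Qed.
Lemma tensorN4 (x y z u : V) : T x y z (- u) = - T x y z u.
Proof. exact: (linear_formN (tensor_lin4 _ _ _)). Qed.

End Multilinear.

Section CurvatureTensors.
Variables (R : realFieldType) (m : nat).
Notation V := 'rV[R]_m.

Lemma curvature_tensor_lincomb (A B : tensor4 R m) (k : R) :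
  curvature_tensor A -> curvature_tensor B ->
  curvature_tensor (fun x y z u => A x y z u + k * B x y z u).
Proof.
case=> [[a1 a2 a3 a4] aN12 aN34 aB] [[b1 b2 b3 b4] bN12 bN34 bB].
split; first split=> *.
- by rewrite a1 b1; ring.
- by rewrite a2 b2; ring.
- by rewrite a3 b3; ring.
- by rewrite a4 b4; ring.
- by move=> x y z u; rewrite aN12 bN12; ring.
- by move=> x y z u; rewrite aN34 bN34; ring.
- move=> x y z u.
  transitivity ((A x y z u + A y z x u + A z x y u) + k * (B x y z u + B y z x u + B z x y u)).
    by ring.
  by rewrite aB bB mulr0 addr0.
Qed.

Lemma RK_lincomb (J : 'M[R]_m) (A B : tensor4 R m) (k : R) :
  RK A J -> RK B J -> RK (fun x y z u => A x y z u + k * B x y z u) J.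
Proof. by move=> hA hB x y z u; rewrite hA hB. Qed.

Variable T : tensor4 R m.
Hypothesis T_curv : curvature_tensor T.

Lemma curvature_ml : multilinear4 T. Proof. by case: T_curv. Qed.
Lemma curvatureN12 (x y z u : V) : T x y z u = - T y x z u. Proof. by case: T_curv. Qed.
Lemma curvatureN34 (x y z u : V) : T x y z u = - T x y u z. Proof. by case: T_curv. Qed.
Lemma curvature_bianchi (x y z u : V) : T x y z u + T y z x u + T z x y u = 0.
Proof. by case: T_curv. Qed.

Lemma curvature_diag12 (x z u : V) : T x x z u = 0.
Proof. by have := curvatureN12 x x z u; lra. Qed.

Lemma curvature_diag34 (x y z : V) : T x y z z = 0.
Proof. by have := curvatureN34 x y z z; lra. Qed.

Lemma curvature_pair_sym (x y z u : V) : T x y z u = T z u x y.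
Proof.
have := curvature_bianchi x y z u; have := curvature_bianchi y z u x.
have := curvature_bianchi z u x y; have := curvature_bianchi u x y z.
rewrite (curvatureN12 z x y u) (curvatureN34 y z u x) (curvatureN34 z u y x).
rewrite (curvatureN12 u y z x) (curvatureN34 y u z x) (curvatureN12 u x z y).
rewrite (curvatureN34 x u z y) (curvatureN34 x z u y) (curvatureN12 u x y z).
rewrite (curvatureN34 x y u z); lra.
Qed.

Lemma curvature_sym_mid (x y z : V) : T x z y x = T x y z x.
Proof. by rewrite curvature_pair_sym (curvatureN12 y x) (curvatureN34 x y) opprK. Qed.

Lemma curvature_eq0_from_diag :
  (forall x y z : V, T x y z x = 0) -> forall x y z u, T x y z u = 0.
Proof.
move=> h x y z u.
have skew a b c d : T a b c d = - T d b c a.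
  have := h (a + d) b c; rewrite (tensorD1 curvature_ml) !(tensorD4 curvature_ml) !h; lra.
have := curvature_bianchi x y z u.
rewrite (curvatureN34 y z x u) (curvatureN12 y z u x) (skew z y u x) (curvatureN34 x y u z).
rewrite (curvatureN34 z x y u) (skew z x u y) (curvatureN34 y x u z) (curvatureN12 y x z u).
rewrite !opprK; lra.
Qed.

End CurvatureTensors.

Section UnitSphere.
Variables (R : realFieldType) (m : nat) (G : 'M[R]_m).
Notation V := 'rV[R]_m.
Local Notation g := (gform G).
Hypothesis G_sym : G^T = G.
Hypothesis G_pos : forall x : V, x != 0 -> 0 < g x x.

Lemma gform_ge0 (x : V) : 0 <= g x x.
Proof.
have [->|/G_pos/ltW //] := eqVneq x 0.
by rewrite /gform !mul0mx mxE.
Qed.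

Lemma gform_line (x e : V) t :
  g (x + t *: e) (x + t *: e) = g x x + 2 * t * g x e + t ^+ 2 * g e e.
Proof.
by rewrite !gformDl !gformDr // !gformZl !gformZr // (gformC G_sym e x); ring.
Qed.

Lemma gform_orth_defect_ge0 (x e : V) : g e e = 1 -> 0 <= g x x - g x e ^+ 2.
Proof.
move=> he; have := gform_ge0 (x + (- g x e) *: e).
by rewrite gform_line he; congr (0 <= _); ring.
Qed.

(* With d := g x x - g x e ^+ 2 >= 0, the point x + t e for t = square_shift x e r
   has squared norm ((d / r + r) / 2) ^+ 2, a nonzero square for every r > 0: such
   points can be normalised without square roots. *)
Definition square_shift (x e : V) (r : R) : R :=
  ((g x x - g x e ^+ 2) / r - r) / 2 - g x e.

Lemma square_shift_unit (x e : V) r : g e e = 1 -> 0 < r ->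
  exists2 s : R, s != 0 &
    g (s^-1 *: (x + square_shift x e r *: e)) (s^-1 *: (x + square_shift x e r *: e)) = 1.
Proof.
move=> he r_gt0; have d_ge0 := gform_orth_defect_ge0 x he.
have dr_ge0 : 0 <= (g x x - g x e ^+ 2) / r by rewrite divr_ge0 // ltW.
have s_gt0 : 0 < ((g x x - g x e ^+ 2) / r + r) / 2 by lra.
exists (((g x x - g x e ^+ 2) / r + r) / 2); first exact: lt0r_neq0 s_gt0.
rewrite gformZl gformZr //.
rewrite gform_line he /square_shift.
field; rewrite (lt0r_neq0 r_gt0) /=; apply: lt0r_neq0.
by have := mulr_gt0 r_gt0 r_gt0; lra.
Qed.

Lemma square_shift_decr (x e : V) r r' : g e e = 1 -> 0 < r -> r < r' ->
  square_shift x e r' < square_shift x e r.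
Proof.
move=> he r_gt0 lt_rr'; have d_ge0 := gform_orth_defect_ge0 x he.
have : (g x x - g x e ^+ 2) / r' <= (g x x - g x e ^+ 2) / r.
  apply: ler_wpM2l => //; have r'_gt0 := lt_trans r_gt0 lt_rr'.
  by rewrite lef_pV2 ?posrE // ltW.
rewrite /square_shift; lra.
Qed.

Lemma poly_eq0_on_square_shifts (x e : V) (p : {poly R}) : g e e = 1 ->
  (forall r, 0 < r -> p.[square_shift x e r] = 0) -> p = 0.
Proof.
move=> he p_root.
apply: (@roots_geq_poly_eq0 _ _ [seq square_shift x e k.+1%:R | k <- iota 0 (size p)]).
- by apply/allP => _ /mapP [k _ ->]; rewrite /root p_root ?ltr0Sn.
- rewrite map_inj_uniq ?iota_uniq // => k k' eq_kk'.
  have decr i i' : (i < i')%N -> square_shift x e i'.+1%:R < square_shift x e i.+1%:R.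
    by move=> lt_ii'; apply: (square_shift_decr x he); rewrite ?ltr0Sn ?ltr_nat.
  by case: (ltngtP k k') => // /decr; rewrite eq_kk' ltxx.
- by rewrite size_map size_iota.
Qed.

Definition polar1 (W : tensor4 R m) (x e : V) :=
  W e x x x + W x e x x + W x x e x + W x x x e.

Lemma tensor_diag_from_sphere (W : tensor4 R m) : multilinear4 W ->
  (forall v, g v v = 1 -> W v v v v = 0) ->
  forall x e, g e e = 1 -> W x x x x = 0 /\ polar1 W x e = 0.
Proof.
move=> W_ml W_sphere x e he.
pose c2 := W e e x x + W e x e x + W e x x e + W x e e x + W x e x e + W x x e e.
pose c3 := W x e e e + W e x e e + W e e x e + W e e e x.
pose p := Poly [:: W x x x x; polar1 W x e; c2; c3; W e e e e].
have p_eval t : p.[t] = W (x + t *: e) (x + t *: e) (x + t *: e) (x + t *: e).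
  rewrite horner_Poly /= /polar1 /c2 /c3.
  rewrite !(tensorD1 W_ml) !(tensorD2 W_ml) !(tensorD3 W_ml) !(tensorD4 W_ml).
  by rewrite !(tensorZ1 W_ml) !(tensorZ2 W_ml) !(tensorZ3 W_ml) !(tensorZ4 W_ml); ring.
have p0 : p = 0.
  apply: (poly_eq0_on_square_shifts (x := x) he) => r r_gt0.
  have [s s_neq0 unit_s] := square_shift_unit x he r_gt0.
  rewrite p_eval; move: unit_s; set v := x + _ *: e => unit_s.
  rewrite -(scalerKV s_neq0 v) (tensorZ1 W_ml) (tensorZ2 W_ml) (tensorZ3 W_ml) (tensorZ4 W_ml).
  by rewrite W_sphere // !mulr0.
by split; [have := coef_Poly [:: W x x x x; polar1 W x e; c2; c3; W e e e e] 0
          | have := coef_Poly [:: W x x x x; polar1 W x e; c2; c3; W e e e e] 1];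
  rewrite -/p p0 coef0.
Qed.

End UnitSphere.

Section Reflections.
Variables (R : realFieldType) (m : nat) (G J : 'M[R]_m).
Notation V := 'rV[R]_m.
Local Notation g := (gform G).
Local Notation j := (Jact J).
Hypothesis G_sym : G^T = G.
Hypothesis G_pos : forall x : V, x != 0 -> 0 < g x x.

(* For w = 0 this is the identity, since 0^-1 = 0. *)
Definition reflection (w v : V) : V := v - (2 * g v w / g w w) *: w.

Lemma reflection_iso w (a b : V) : g (reflection w a) (reflection w b) = g a b.
Proof.
rewrite /reflection !(gformBl, gformBr G_sym) !(gformZl, gformZr G_sym) (gformC G_sym w b).
have [->|w_neq0] := eqVneq (g w w) 0; first by rewrite invr0 !mulr0 !mul0r !subr0.
by field.
Qed.

Lemma reflection_fix w (v : V) : g v w = 0 -> reflection w v = v.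
Proof. by move=> vw; rewrite /reflection vw mulr0 mul0r scale0r subr0. Qed.

Lemma reflection_swap (a b : V) : g a a = g b b -> reflection (a - b) a = b.
Proof.
move=> ab; have [->|a_neq_b] := eqVneq a b; first by rewrite subrr /reflection scaler0 subr0.
have norm_ab : g (a - b) (a - b) = 2 * (g a a - g a b).
  by rewrite !(gformBl, gformBr G_sym) (gformC G_sym b a) ab; ring.
have : 0 < g (a - b) (a - b) by apply: G_pos; rewrite subr_eq0.
rewrite norm_ab => pos_ab; rewrite /reflection.
have -> : 2 * g a (a - b) / g (a - b) (a - b) = 1.
  by rewrite norm_ab gformBr //; field; move: pos_ab; rewrite pmulr_rgt0 // => /gt_eqF->.
by rewrite scale1r opprB addrC subrK.
Qed.

Hypothesis J2 : J *m J = - 1%:M.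
Hypothesis J_iso : forall x y, g (j x) (j y) = g x y.
Variable E : 'I_m -> V.
Hypothesis E_onb : orthonormal_basis G E.

(* Map E0 to x, then the image of E1 to J x, by two reflections; the image of
   E2 is the required vector. *)
Lemma exists_unit_orthJ (x : V) : (3 <= m)%N -> g x x = 1 ->
  exists e, [/\ g e e = 1, g e x = 0 & g e (j x) = 0].
Proof.
move=> m_ge3 unit_x.
pose k0 : 'I_m := Ordinal (leq_trans (isT : 0 < 3)%N m_ge3).
pose k1 : 'I_m := Ordinal (leq_trans (isT : 1 < 3)%N m_ge3).
pose k2 : 'I_m := Ordinal m_ge3.
pose s1 := reflection (E k0 - x).
have s1E0 : s1 (E k0) = x by rewrite /s1 reflection_swap // E_onb eqxx unit_x.
pose a := s1 (E k1); pose b := s1 (E k2).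
have ab : g a b = 0 by rewrite reflection_iso E_onb.
have unit_a : g a a = 1 by rewrite reflection_iso E_onb eqxx.
have ax : g a x = 0 by rewrite -s1E0 reflection_iso E_onb.
have bx : g b x = 0 by rewrite -s1E0 reflection_iso E_onb.
pose s2 := reflection (a - j x).
have s2a : s2 a = j x by rewrite /s2 reflection_swap // J_iso unit_a unit_x.
have s2x : s2 x = x.
  rewrite /s2 reflection_fix // gformBr // (gformC G_sym x a) ax (gformC G_sym x).
  by rewrite (gform_J_self G_sym J2 J_iso) subr0.
exists (s2 b); split.
- by rewrite reflection_iso reflection_iso E_onb eqxx.
- by rewrite -{1}s2x reflection_iso.
- by rewrite -s2a reflection_iso (gformC G_sym b a).
Qed.

End Reflections.

Section RKVanishing.
Variables (R : realFieldType) (m : nat) (G J : 'M[R]_m) (E : 'I_m -> 'rV[R]_m).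
Notation V := 'rV[R]_m.
Local Notation g := (gform G).
Local Notation j := (Jact J).
Hypothesis G_sym : G^T = G.
Hypothesis G_pos : forall x : V, x != 0 -> 0 < g x x.
Hypothesis J2 : J *m J = - 1%:M.
Hypothesis J_iso : forall x y, g (j x) (j y) = g x y.
Hypothesis E_onb : orthonormal_basis G E.
Hypothesis m_ge3 : (3 <= m)%N.

Variable U : tensor4 R m.
Hypothesis U_curv : curvature_tensor U.
Hypothesis U_RK : RK U J.
Hypothesis U_ricci : forall y z, Ricci U E y z = 0.
Hypothesis U_antihol : const_antihol U G J 0.

Let U_ml := curvature_ml U_curv.
Let gC := gformC G_sym.
Let gJl := gform_Jl J2 J_iso.
Let gJ_self := gform_J_self G_sym J2 J_iso.

Lemma sectional_antihol (x v : V) :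
  g x x = 1 -> g v v = 1 -> g x v = 0 -> g (j x) v = 0 -> U x v v x = 0.
Proof.
move=> unit_x unit_v xv jxv; apply: U_antihol; split=> //; split=> //.
by rewrite gJl gC jxv oppr0.
Qed.

Lemma sectional_orthJ_unit (x y : V) :
  g x x = 1 -> g x y = 0 -> g (j x) y = 0 -> U x y y x = 0.
Proof.
move=> unit_x xy jxy.
have [e [unit_e ex ejx]] := exists_unit_orthJ G_sym G_pos J2 J_iso E_onb m_ge3 unit_x.
pose p := Poly [:: U x y y x; U x y e x + U x e y x; U x e e x].
have p_eval t : p.[t] = U x (y + t *: e) (y + t *: e) x.
  rewrite horner_Poly /= !(tensorD2 U_ml) !(tensorD3 U_ml).
  by rewrite !(tensorZ2 U_ml) !(tensorZ3 U_ml); ring.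
have p0 : p = 0.
  apply: (poly_eq0_on_square_shifts G_sym G_pos (x := y) unit_e) => r r_gt0.
  have [s s_neq0 unit_s] := square_shift_unit G_sym G_pos y unit_e r_gt0.
  rewrite p_eval; move: unit_s; set v := y + _ *: e => unit_s.
  rewrite -(scalerKV s_neq0 v) (tensorZ2 U_ml) (tensorZ3 U_ml) sectional_antihol ?mulr0 //.
    by rewrite gformZr // gformDr // gformZr // xy (gC x e) ex; ring.
  by rewrite gformZr // gformDr // gformZr // jxy (gC (j x) e) ejx; ring.
by have := coef_Poly [:: U x y y x; U x y e x + U x e y x; U x e e x] 0; rewrite -/p p0 coef0.
Qed.

Lemma sectional_orthJ (x w : V) : g x x = 1 -> g (j x) w = 0 -> U x w w x = 0.
Proof.
move=> unit_x jxw.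
have : U x (w - g w x *: x) (w - g w x *: x) x = 0.
  apply: sectional_orthJ_unit => //.
    by rewrite gformBr // gformZr // unit_x gC; ring.
  by rewrite gformBr // gformZr // jxw gJ_self; ring.
rewrite !(tensorB2 U_ml) !(tensorB3 U_ml) !(tensorZ2 U_ml) !(tensorZ3 U_ml).
by rewrite !(curvature_diag12 U_curv) (curvature_diag34 U_curv); lra.
Qed.

Lemma polar_orthJ (x y z : V) :
  g x x = 1 -> g (j x) y = 0 -> g (j x) z = 0 -> U x y z x = 0.
Proof.
move=> unit_x jxy jxz.
have := sectional_orthJ (w := y + z) unit_x; rewrite gformDr // jxy jxz addr0.
rewrite (tensorD2 U_ml) !(tensorD3 U_ml) (curvature_sym_mid U_curv x y z).
by rewrite (sectional_orthJ unit_x jxy) (sectional_orthJ unit_x jxz); lra.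
Qed.

Lemma sectional_unit_expansion (x y z : V) : g x x = 1 ->
  U x y z x = g (j x) y * U x (j x) z x + g (j x) z * U x (j x) y x
              - g (j x) y * g (j x) z * U x (j x) (j x) x.
Proof.
move=> unit_x; have unit_jx : g (j x) (j x) = 1 by rewrite J_iso.
have := polar_orthJ (y := y - g (j x) y *: j x) (z := z - g (j x) z *: j x) unit_x.
rewrite !gformBr // !gformZr // unit_jx !mulr1 !subrr => /(_ erefl erefl).
rewrite !(tensorB2 U_ml) !(tensorB3 U_ml) !(tensorZ2 U_ml) !(tensorZ3 U_ml).
by rewrite (curvature_sym_mid U_curv x y (j x)); lra.
Qed.

(* Trace the expansion over y = z = E i and use Ricci-flatness. *)
Lemma sectional_J_unit (x : V) : g x x = 1 -> U x (j x) (j x) x = 0.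
Proof.
move=> unit_x; have := U_ricci x x; rewrite /Ricci.
under eq_bigr => i _ do rewrite (curvature_pair_sym U_curv) sectional_unit_expansion //.
rewrite (eq_bigr (fun i => 2 * (g (j x) (E i) * U x (j x) (E i) x)
   - g (j x) (E i) * g (j x) (E i) * U x (j x) (j x) x)) => [|i _]; last by ring.
rewrite sumrB -mulr_sumr -mulr_suml.
rewrite (sum_onb_form E_onb _ (tensor_lin3 U_ml x (j x) x)).
by rewrite (sum_onb_form E_onb _ (gform_linr G_sym (j x))) J_iso unit_x; lra.
Qed.

Lemma sectional_unit (x y z : V) : g x x = 1 ->
  U x y z x = g (j x) y * U x (j x) z x + g (j x) z * U x (j x) y x.
Proof. by move=> unit_x; rewrite sectional_unit_expansion // sectional_J_unit // mulr0 subr0. Qed.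

(* The diagonal of [star_defect y z] at x is [sectional_unit] made homogeneous
   of degree 4 in x, so it vanishes on the unit sphere. *)
Definition star_defect (y z : V) : tensor4 R m := fun p q r s =>
  g p q * U r y z s - g (j p) y * U q (j r) z s - g (j p) z * U q (j r) y s.

Lemma star_defect_ml y z : multilinear4 (star_defect y z).
Proof.
case: U_ml => ml1 ml2 ml3 ml4.
split=> a p p' q r s; rewrite /star_defect ?gformPl ?gformPr // ?JactP ?gformPl.
all: by rewrite ?ml1 ?ml2 ?ml3 ?ml4; ring.
Qed.

Lemma star_defect_diag_polar y z x e : g e e = 1 ->
  star_defect y z x x x x = 0 /\ polar1 (star_defect y z) x e = 0.
Proof.
apply: (tensor_diag_from_sphere G_sym G_pos (star_defect_ml y z)) => v unit_v.
by rewrite /star_defect unit_v mul1r sectional_unit //; ring.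
Qed.

Let onb_unit := onb_unit E_onb.

Lemma sectional_homogeneous (x y z : V) :
  g x x * U x y z x = g (j x) y * U x (j x) z x + g (j x) z * U x (j x) y x.
Proof.
have [+ _] := star_defect_diag_polar y z x (onb_unit (Ordinal (ltnW (ltnW m_ge3)))).
by rewrite /star_defect; lra.
Qed.

Let jjx := JactK J2.

Lemma sectional_Jswap (x w : V) : U (j x) x w (j x) = U x (j x) (j w) x.
Proof.
have [->|x_neq0] := eqVneq x 0; first by rewrite Jact0 !(tensor0 U_ml).
have gx_neq0 : g x x != 0 := lt0r_neq0 (G_pos x_neq0).
pose defect w := U x (j x) (j w) x - U (j x) x w (j x).
have defect_polar y z : g x y * defect z + g x z * defect y = 0.
  have := sectional_homogeneous (j x) y z.
  rewrite (U_RK (j x) y z (j x)) !jjx !(tensorN1 U_ml) !(tensorN2 U_ml) !(tensorN4 U_ml).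
  rewrite opprK J_iso !gformNl.
  have := sectional_homogeneous x (j y) (j z); rewrite !J_iso /defect; lra.
have : g x x * defect x = 0 by have := defect_polar x x; lra.
move/eqP; rewrite mulf_eq0 (negbTE gx_neq0) /= => /eqP defect_x.
have := defect_polar w x; rewrite defect_x mulr0 add0r.
by move/eqP; rewrite mulf_eq0 (negbTE gx_neq0) /= /defect subr_eq0 => /eqP.
Qed.

Lemma sum_sectional_J_onb (x : V) : \sum_i U x (j (E i)) (E i) x = 0.
Proof.
have [->|x_neq0] := eqVneq x 0; first by apply: big1 => i _; rewrite (tensor0 U_ml).
have : g x x * \sum_i U x (j (E i)) (E i) x = 0.
  rewrite mulr_sumr.
  under eq_bigr => i _ do rewrite sectional_homogeneous J_iso.
  rewrite big_split /= (sum_onb_form E_onb _ (tensor_lin3 U_ml x (j x) x)).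
  rewrite (sum_onb_form E_onb _ (linear_form_comp_J J (tensor_lin3 U_ml x (j x) x))).
  by rewrite jjx (tensorN3 U_ml) (curvature_diag34 U_curv) oppr0 addr0.
by move/eqP; rewrite mulf_eq0 (gt_eqF (G_pos x_neq0)) => /eqP.
Qed.

(* Trace the first variation of [star_defect (E i) z] at x in the direction E i. *)
Lemma sectional_Jtrace (x z : V) : x != 0 -> U x (j x) (j z) x = U x (j x) z (j x).
Proof.
move=> x_neq0.
have : \sum_i polar1 (star_defect (E i) z) x (E i) = 0.
  by apply: big1 => i _; case: (star_defect_diag_polar (E i) z x (onb_unit i)).
rewrite (eq_bigr (fun i =>
    g (E i) x * U x (E i) z x + g x (E i) * U x (E i) z x
  + g (E i) (j z) * U x (j x) (E i) x - g (j x) (E i) * U (E i) (j x) z x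
  + g (j x) z * U (E i) (j x) x (E i) - g (j x) (E i) * U x (j (E i)) z x
  - g (j x) z * U x (j (E i)) (E i) x - g x x * U (E i) x z (E i)
  - g (j x) (E i) * U x (j x) z (E i))); last first.
  move=> i _; rewrite /polar1 /star_defect !gJ_self !(curvature_diag12 U_curv).
  rewrite !(curvature_diag34 U_curv) (gJl (E i) z) (curvatureN34 U_curv (E i) (j x) (E i) x).
  by rewrite (curvatureN12 U_curv x (E i) z (E i)); ring.
rewrite !big_split !sumrN /= -!mulr_sumr.
rewrite (sum_onb_formC G_sym E_onb _ (tensor_lin2 U_ml x z x)).
rewrite (sum_onb_form E_onb _ (tensor_lin2 U_ml x z x)).
rewrite (sum_onb_formC G_sym E_onb _ (tensor_lin3 U_ml x (j x) x)).
rewrite (sum_onb_form E_onb _ (tensor_lin1 U_ml (j x) z x)).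
rewrite (sum_onb_form E_onb _ (linear_form_comp_J J (tensor_lin2 U_ml x z x))).
rewrite (sum_onb_form E_onb _ (tensor_lin4 U_ml x (j x) z)) sum_sectional_J_onb.
have ricci0 y w : \sum_i U (E i) y w (E i) = 0 by exact: U_ricci.
rewrite !ricci0 jjx (tensorN2 U_ml) !(curvature_diag12 U_curv); lra.
Qed.

Lemma sectional_J_eq0 (x w : V) : U x (j x) w x = 0.
Proof.
have [->|x_neq0] := eqVneq x 0; first by rewrite (tensor0 U_ml).
have J_eq0 z : U x (j x) (j z) x = 0.
  have := sectional_Jtrace z x_neq0; have := sectional_Jswap x z.
  rewrite (curvatureN12 U_curv x (j x) z (j x)); lra.
have -> : w = j (- j w) by rewrite JactN jjx opprK.
exact: J_eq0.
Qed.

Theorem RK_curvature_eq0 (x y z u : V) : U x y z u = 0.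
Proof.
apply: (curvature_eq0_from_diag U_curv) => {}x {}y {}z.
have [->|x_neq0] := eqVneq x 0; first by rewrite (tensor0 U_ml).
have := sectional_homogeneous x y z; rewrite !sectional_J_eq0 !mulr0 addr0.
by move/eqP; rewrite mulf_eq0 (gt_eqF (G_pos x_neq0)) => /eqP.
Qed.

End RKVanishing.

Section ModelTensors.
Variables (R : realFieldType) (m : nat) (G J : 'M[R]_m) (E : 'I_m -> 'rV[R]_m).
Notation V := 'rV[R]_m.
Local Notation g := (gform G).
Local Notation j := (Jact J).
Hypothesis G_sym : G^T = G.
Hypothesis J2 : J *m J = - 1%:M.
Hypothesis J_iso : forall x y, g (j x) (j y) = g x y.
Hypothesis E_onb : orthonormal_basis G E.

Let gC := gformC G_sym.
Let gJl := gform_Jl J2 J_iso.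
Let gJ_self := gform_J_self G_sym J2 J_iso.
Let jjx := JactK J2.
Let gJ_skew (x y : V) : g (j x) y = - g (j y) x.
Proof. by rewrite gJl gC. Qed.

Section Psi.
Variable S : V -> V -> R.
Hypothesis S_linl : forall z, linear_form (fun x => S x z).
Hypothesis S_sym : forall x y, S x y = S y x.
Hypothesis S_J : forall x y, S (j x) (j y) = S x y.

Let S_linr z : linear_form (S z).
Proof. by move=> a x y; rewrite !(S_sym z) S_linl. Qed.
Let SPl a (x y z : V) : S (a *: x + y) z = a * S x z + S y z := S_linl z a x y.
Let SPr a (x y z : V) : S z (a *: x + y) = a * S z x + S z y := S_linr z a x y.
Let SNl (x z : V) : S (- x) z = - S x z := linear_formN (S_linl z) x.
Let S_J_skew (x y : V) : S (j x) y = - S (j y) x.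
Proof. by rewrite -{1}S_J jjx SNl S_sym. Qed.
Let S_J_self (x : V) : S (j x) x = 0.
Proof. by have := S_J_skew x x; lra. Qed.

Lemma psi_curvature : curvature_tensor (psi G J S).
Proof.
split; first by split=> a p p' q r s; rewrite /psi ?JactP ?gformPl ?gformPr ?SPl ?SPr //; ring.
- by move=> x y z u; rewrite /psi (gJ_skew y x) (S_J_skew y x); ring.
- by move=> x y z u; rewrite /psi (gJ_skew u z) (S_J_skew u z); ring.
- move=> x y z u; rewrite /psi ?(gJ_skew y x) ?(gJ_skew z x) ?(gJ_skew u x) ?(gJ_skew z y).
  rewrite ?(gJ_skew u y) ?(gJ_skew u z) ?(S_J_skew y x) ?(S_J_skew z x) ?(S_J_skew u x).
  by rewrite ?(S_J_skew z y) ?(S_J_skew u y) ?(S_J_skew u z); ring.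
Qed.

Lemma psi_RK : RK (psi G J S) J.
Proof. by move=> x y z u; rewrite /psi !J_iso !S_J. Qed.

Lemma psi_antihol (x y : V) : g (j x) y = 0 -> psi G J S x y y x = 0.
Proof. by move=> jxy; rewrite /psi jxy (gJ_skew y x) jxy !gJ_self; ring. Qed.

Lemma Ricci_psi (y z : V) : Ricci (psi G J S) E y z = 6 * S y z.
Proof.
rewrite /Ricci (eq_bigr (fun i => g (E i) (j z) * S (j y) (E i)
    + 2 * (g (E i) (j y) * S (j z) (E i)) - g (j y) (E i) * S (j (E i)) z
    - 2 * (g (j z) (E i) * S (j (E i)) y))); last first.
  by move=> i _; rewrite /psi !S_J_self !gJ_self (gJl (E i) z) (gJl (E i) y); ring.
rewrite !big_split !sumrN -!mulr_sumr /=.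
rewrite (sum_onb_formC G_sym E_onb _ (S_linr (j y))) (sum_onb_formC G_sym E_onb _ (S_linr (j z))).
rewrite (sum_onb_form E_onb _ (linear_form_comp_J J (S_linl z))).
rewrite (sum_onb_form E_onb _ (linear_form_comp_J J (S_linl y))) !jjx !SNl !S_J (S_sym z y).
ring.
Qed.

Lemma Ricci_Rprime_psi (y z : V) :
  Ricci (Rprime (psi G J S) J) E y z = g y z * scalar_curv S E + (m%:R + 2) * S y z.
Proof.
rewrite /Ricci /Rprime (eq_bigr (fun i => g y z * S (E i) (E i) - g (E i) z * S y (E i)
    + 2 * (g (E i) (j y) * S (j z) (E i)) + S y z * g (E i) (E i)
    - g y (E i) * S (E i) z - 2 * (g (j z) (E i) * S (j (E i)) y))); last first.
  by move=> i _; rewrite /psi !J_iso !S_J (gJl (E i) y) -(S_J (j z) (E i)) S_J; ring.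
rewrite !big_split !sumrN -!mulr_sumr /= (trace_gform E_onb).
rewrite (sum_onb_formC G_sym E_onb _ (S_linr y)) (sum_onb_formC G_sym E_onb _ (S_linr (j z))).
rewrite (sum_onb_form E_onb _ (S_linl z)) (sum_onb_form E_onb _ (linear_form_comp_J J (S_linl y))).
by rewrite S_J jjx SNl (S_sym z y) /scalar_curv; ring.
Qed.

End Psi.

Lemma R1_curvature : curvature_tensor (R1 G).
Proof.
split; first by split=> a p p' q r s; rewrite /R1 ?gformPl ?gformPr //; ring.
- by move=> x y z u; rewrite /R1 (gC y z) (gC x z); ring.
- by move=> x y z u; rewrite /R1; ring.
- by move=> x y z u; rewrite /R1 (gC z x) (gC y x) (gC z y); ring.
Qed.

Lemma R1_RK : RK (R1 G) J.
Proof. by move=> x y z u; rewrite /R1 !J_iso. Qed.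

Lemma Ricci_R1 (y z : V) : Ricci (R1 G) E y z = (m%:R - 1) * g y z.
Proof.
rewrite /Ricci /R1 sumrB -mulr_sumr (trace_gform E_onb).
by rewrite (sum_onb_formC G_sym E_onb _ (gform_linr G_sym y)); ring.
Qed.

Lemma Ricci_Rprime_R1 (y z : V) : Ricci (Rprime (R1 G) J) E y z = g y z.
Proof.
rewrite /Ricci /Rprime /R1 sumrB big1 => [|i _]; last by rewrite (gC (E i)) gJ_self mulr0.
rewrite sub0r (sum_onb_formC G_sym E_onb _ (linear_form_comp_J J (gform_linr G_sym y))).
by rewrite jjx gformNr // opprK.
Qed.

Let g_linl z : linear_form (fun x => g x z) := gform_linl G z.

Lemma R2E (x y z u : V) : R2 G J x y z u = psi G J g x y z u / 2.
Proof. by rewrite /R2 /psi; field. Qed.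

Lemma R2_curvature : curvature_tensor (R2 G J).
Proof.
have [[ml1 ml2 ml3 ml4] N12 N34 bianchi] := psi_curvature g_linl gC J_iso.
split; first split; move=> *; rewrite !R2E ?ml1 ?ml2 ?ml3 ?ml4; try ring.
- by rewrite N12; ring.
- by rewrite N34; ring.
- by rewrite -!mulrDl bianchi mul0r.
Qed.

Lemma R2_RK : RK (R2 G J) J.
Proof. by move=> x y z u; rewrite !R2E (psi_RK J_iso). Qed.

Lemma R2_antihol (x y : V) : g (j x) y = 0 -> R2 G J x y y x = 0.
Proof. by move=> jxy; rewrite R2E (psi_antihol g) // mul0r. Qed.

Lemma Ricci_R2 (y z : V) : Ricci (R2 G J) E y z = 3 * g y z.
Proof.
rewrite /Ricci (eq_bigr (fun i => psi G J g (E i) y z (E i) / 2)) => [|i _]; last exact: R2E.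
have := Ricci_psi g_linl gC J_iso y z; rewrite /Ricci => psi_trace.
by rewrite -mulr_suml psi_trace; field.
Qed.

Lemma Ricci_Rprime_R2 (y z : V) : Ricci (Rprime (R2 G J) J) E y z = (m%:R + 1) * g y z.
Proof.
rewrite /Ricci /Rprime (eq_bigr (fun i => psi G J g (E i) y (j z) (j (E i)) / 2)) => [|i _].
  rewrite -mulr_suml; have := Ricci_Rprime_psi g_linl gC J_iso y z.
  rewrite /Ricci /Rprime => ->.
  by rewrite /scalar_curv (trace_gform E_onb); field.
exact: R2E.
Qed.

End ModelTensors.

Section RicciTensor.
Variables (R : realFieldType) (m : nat) (G J : 'M[R]_m) (E : 'I_m -> 'rV[R]_m).
Variable T : tensor4 R m.
Hypothesis T_curv : curvature_tensor T.
Let T_ml := curvature_ml T_curv.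

Lemma Ricci_linl z : linear_form (fun y => Ricci T E y z).
Proof.
move=> a x y; rewrite /Ricci mulr_sumr -big_split; apply: eq_bigr => i _.
exact: (tensor_lin2 T_ml).
Qed.

Lemma Ricci_sym y z : Ricci T E y z = Ricci T E z y.
Proof.
apply: eq_bigr => i _.
by rewrite (curvature_pair_sym T_curv) (curvatureN12 T_curv) (curvatureN34 T_curv) opprK.
Qed.

Hypothesis G_sym : G^T = G.
Hypothesis J2 : J *m J = - 1%:M.
Hypothesis J_iso : forall x y, gform G (Jact J x) (Jact J y) = gform G x y.
Hypothesis E_onb : orthonormal_basis G E.
Hypothesis T_RK : RK T J.

Lemma Ricci_J y z : Ricci T E (Jact J y) (Jact J z) = Ricci T E y z.
Proof.
rewrite /Ricci (eq_bigr (fun i => T (Jact J (E i)) y z (Jact J (E i)))) => [|i _]; last first.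
  by rewrite T_RK !(JactK J2) (tensorN2 T_ml) (tensorN3 T_ml) opprK.
apply: (trace_J_invariant G_sym J2 J_iso E_onb (B := fun a b => T a y z b)).
  by move=> b; exact: (tensor_lin1 T_ml).
by move=> a; exact: (tensor_lin4 T_ml).
Qed.

End RicciTensor.

Section Decomposition.
Variables (R : realFieldType) (m : nat) (G J : 'M[R]_m) (E : 'I_m -> 'rV[R]_m).
Variables (Rc : tensor4 R m) (nu : R).
Notation V := 'rV[R]_m.
Local Notation g := (gform G).
Local Notation j := (Jact J).
Hypothesis G_sym : G^T = G.
Hypothesis G_pos : forall x : V, x != 0 -> 0 < g x x.
Hypothesis J2 : J *m J = - 1%:M.
Hypothesis J_iso : forall x y, g (j x) (j y) = g x y.
Hypothesis E_onb : orthonormal_basis G E.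
Hypothesis Rc_curv : curvature_tensor Rc.
Hypothesis Rc_RK : RK Rc J.
Hypothesis Rc_antihol : const_antihol Rc G J nu.
Hypothesis m_ge3 : (3 <= m)%N.

Let S := Ricci Rc E.
Let tau := scalar_curv S E.
Let S_linl := Ricci_linl E Rc_curv.
Let S_sym := Ricci_sym E Rc_curv.
Let S_J := Ricci_J Rc_curv G_sym J2 J_iso E_onb Rc_RK.
Let c : R := (m%:R - 1) / 3.

Let U : tensor4 R m := fun x y z u =>
  Rc x y z u + (- 6^-1) * psi G J S x y z u + (- nu) * R1 G x y z u + (c * nu) * R2 G J x y z u.

Let U_curv : curvature_tensor U.
Proof.
rewrite /U; apply: curvature_tensor_lincomb (R2_curvature G_sym J2 J_iso).
apply: curvature_tensor_lincomb (R1_curvature G_sym).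
exact: curvature_tensor_lincomb Rc_curv (psi_curvature G_sym J2 J_iso S_linl S_sym S_J).
Qed.

Let U_RK : RK U J.
Proof.
rewrite /U; apply: RK_lincomb; last exact: R2_RK J_iso.
apply: RK_lincomb; last exact: R1_RK J_iso.
by apply: RK_lincomb; last exact: (psi_RK (S := S) J_iso S_J).
Qed.

Let U_ricci y z : Ricci U E y z = 0.
Proof.
have psi_y := Ricci_psi G_sym J2 J_iso E_onb S_linl S_sym S_J y z.
have R1_y := Ricci_R1 G_sym E_onb y z; have R2_y := Ricci_R2 G_sym J2 J_iso E_onb y z.
rewrite /Ricci in psi_y R1_y R2_y.
rewrite /U /Ricci !big_split -!mulr_sumr /= psi_y R1_y R2_y.
by rewrite -/(Ricci Rc E y z) -/S /c; field.
Qed.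

Let U_antihol : const_antihol U G J 0.
Proof.
move=> x y xy_onb; have Rc_xy := Rc_antihol xy_onb.
case: xy_onb => unit_x unit_y xy [_ jxy _ _].
rewrite /U Rc_xy (psi_antihol G_sym J2 J_iso) // (R2_antihol G_sym J2 J_iso) //.
by rewrite /R1 unit_x unit_y xy (gformC G_sym) xy; ring.
Qed.

Lemma curvature_decomposition (x y z u : V) :
  Rc x y z u = 6^-1 * psi G J S x y z u + nu * R1 G x y z u - c * nu * R2 G J x y z u.
Proof.
apply/eqP; rewrite -subr_eq0; apply/eqP.
rewrite -(RK_curvature_eq0 G_sym G_pos J2 J_iso E_onb m_ge3 U_curv U_RK U_ricci U_antihol x y z u).
by rewrite /U; ring.
Qed.

Lemma Ricci_Rprime_decomposition (y z : V) :
  Ricci (Rprime Rc J) E y z =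
  6^-1 * (g y z * tau + (m%:R + 2) * S y z) + nu * g y z - c * nu * ((m%:R + 1) * g y z).
Proof.
rewrite -(Ricci_Rprime_psi G_sym J2 J_iso E_onb S_linl S_sym S_J).
rewrite -(Ricci_Rprime_R2 G_sym J2 J_iso E_onb y z) -(Ricci_Rprime_R1 G_sym J2 J_iso E_onb y z).
rewrite {1}/Ricci /Rprime (eq_bigr _ (fun i _ => curvature_decomposition _ _ _ _)).
by rewrite !big_split sumrN -!mulr_sumr.
Qed.

Lemma scalar_Rprime_decomposition :
  scalar_curv (Ricci (Rprime Rc J) E) E =
  6^-1 * (m%:R * tau + (m%:R + 2) * tau) + nu * m%:R - c * nu * ((m%:R + 1) * m%:R).
Proof.
rewrite /scalar_curv; under eq_bigr do rewrite Ricci_Rprime_decomposition.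
rewrite !big_split sumrN /= -!mulr_sumr big_split /= -!mulr_sumr -mulr_suml.
by rewrite (trace_gform E_onb).
Qed.

End Decomposition.

Theorem proposition1 (R : realFieldType) (n : nat) (hn : (2 <= n)%N)
    (G J : 'M[R]_(n.*2)) (E : 'I_(n.*2) -> 'rV[R]_(n.*2))
    (Rc : tensor4 R (n.*2)) (nu : R) :
  G^T = G ->
  (forall x : 'rV[R]_(n.*2), x != 0 -> 0 < gform G x x) ->
  J *m J = - 1%:M ->
  (forall x y, gform G (Jact J x) (Jact J y) = gform G x y) ->
  orthonormal_basis G E ->
  curvature_tensor Rc ->
  RK Rc J ->
  const_antihol Rc G J nu ->
  let S := Ricci Rc E in
  let S' := Ricci (Rprime Rc J) E in
  let tau := scalar_curv S E in
  let tau' := scalar_curv S' E in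
  [/\ (forall x y z u,
         Rc x y z u = 6^-1 * psi G J S x y z u + nu * R1 G x y z u
                      - ((2 * n%:R - 1) / 3) * nu * R2 G J x y z u),
      (forall y z,
         3 * S' y z - (n%:R + 1) * S y z
         = (2 * n%:R)^-1 * (3 * tau' - (n%:R + 1) * tau) * gform G y z) &
      nu = ((2 * n%:R + 1) * tau - 3 * tau') / (8 * n%:R * (n%:R ^+ 2 - 1))].
Proof.
move=> G_sym G_pos J2 J_iso E_onb Rc_curv Rc_RK Rc_antihol S S' tau tau'.
have m_ge3 : (3 <= n.*2)%N by rewrite -addnn (leq_trans _ (leq_add hn hn)).
have m_eq : (n.*2)%:R = 2 * n%:R :> R by rewrite -mul2n natrM.
have n_gt1 : (1 < n%:R :> R) by rewrite ltr1n.
have n_neq0 : n%:R != 0 :> R by rewrite gt_eqF // (lt_trans ltr01).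
have n21_neq0 : n%:R ^+ 2 - 1 != 0 :> R by rewrite subr_eq0 gt_eqF // exprn_egt1.
have := curvature_decomposition G_sym G_pos J2 J_iso E_onb Rc_curv Rc_RK Rc_antihol m_ge3.
have := Ricci_Rprime_decomposition G_sym G_pos J2 J_iso E_onb Rc_curv Rc_RK Rc_antihol m_ge3.
have := scalar_Rprime_decomposition G_sym G_pos J2 J_iso E_onb Rc_curv Rc_RK Rc_antihol m_ge3.
rewrite m_eq -/S -/S' -/tau -/tau' => tau'_eq S'_eq Rc_eq.
split=> [//|y z|]; first rewrite S'_eq; rewrite tau'_eq; field; by rewrite ?n_neq0 ?n21_neq0.
Qed.
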